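(* Let $\langle A,f,g\rangle$ be a PS-algebra satisfying (ABT0) $x\leq f(x,x)$, (ABT2) $y\cdot f(x,z)\leq f(x\cdot f(x,y),z)$ and (ABT3) $f(x,g(x,-y)\cdot y)\leq y$ for all $x,y,z\in A$. Then the map $d\colon A\to A$, $d(a)=f(a,a)+-g(a,a)$, is the unary discriminator on $A$ (i.e. $d(0)=0$ and $d(a)=1$ for $a\neq0$) if and only if $\langle A,f,g\rangle$ satisfies (ABTW): for all $a\in A$, $a\neq0\Rightarrow g(a,a)\leq a$.
   Context: A PS-algebra is $\langle A,f,g\rangle$ where $A$ is a Boolean algebra with at least two elements (operations $+,\cdot,-,0,1$) and $f,g\colon A^2\to A$ satisfy: $f(x,y)=0$ whenever $x=0$ or $y=0$; $f$ is additive in each argument; $g(x,y)=1$ whenever $x=0$ or $y=0$; $g$ is co-additive in each argument ($g(x+x',y)=g(x,y)\cdot g(x',y)$, $g(x,y+y')=g(x,y)\cdot g(x,y')$). *)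

From mathcomp Require Import all_boot all_order.
Set Implicit Arguments. Unset Strict Implicit. Unset Printing Implicit Defensive.
Import Order.TTheory.
Local Open Scope order_scope.

(* Boolean algebras are MathComp's ctbDistrLatticeType:
   + = join `|`, . = meet `&`, - = complement ~`, 0 = \bot, 1 = \top. *)

Definition PS_algebra (d : Order.disp_t) (A : ctbDistrLatticeType d)
  (f g : A -> A -> A) : Prop :=
  (\bot : A) != \top /\
      (forall x y : A, x = \bot \/ y = \bot -> f x y = \bot) /\
      (forall x x' y : A, f (x `|` x') y = f x y `|` f x' y) /\
      (forall x y y' : A, f x (y `|` y') = f x y `|` f x y') /\
      (forall x y : A, x = \bot \/ y = \bot -> g x y = \top) /\
      (forall x x' y : A, g (x `|` x') y = g x y `&` g x' y) /\
      (forall x y y' : A, g x (y `|` y') = g x y `&` g x y').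

Definition dmap (d : Order.disp_t) (A : ctbDistrLatticeType d)
  (f g : A -> A -> A) (a : A) : A := f a a `|` ~` (g a a).

Definition unary_discriminator (d : Order.disp_t) (A : ctbDistrLatticeType d)
  (t : A -> A) : Prop :=
  t \bot = \bot /\ forall a : A, a != \bot -> t a = \top.

From mathcomp Require Import all_boot all_order.
Import Order.TTheory Order.Theory.
Local Open Scope order_scope.

(* Under (ABT0), g(a,a) <= a gives d(a) >= a + -a = 1.  Conversely, d(a) = 1
   means g(a,a) <= f(a,a).  The part c = g(a,a) . -a satisfies f(a,c) <= -a by
   (ABT3), so (ABT2) gives c . f(a,a) <= f(a . f(a,c), a) = f(0,a) = 0; as also
   c <= f(a,a), c = 0, i.e. g(a,a) <= a. *)

Section BooleanAlgebra.
Context {disp : Order.disp_t} {A : ctbDistrLatticeType disp}.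
Implicit Types x y : A.

Lemma joinxC_eq1 x y : (x `|` ~` y == \top) = (y <= x).
Proof. by rewrite -(inj_eq compl_inj) compl1 complU complK meetC disj_leC complK. Qed.

End BooleanAlgebra.

Section Discriminator.
Context {disp : Order.disp_t} {A : ctbDistrLatticeType disp} {f g : A -> A -> A}.

Hypothesis f0x : forall y, f \bot y = \bot.
Hypothesis g00 : g \bot \bot = \top.
Hypothesis ABT0 : forall x, x <= f x x.
Hypothesis ABT2 : forall x y z, y `&` f x z <= f (x `&` f x y) z.
Hypothesis ABT3 : forall x y, f x (g x (~` y) `&` y) <= y.

Lemma dmap0 : dmap f g \bot = \bot.
Proof. by rewrite /dmap f0x g00 compl1 joinx0. Qed.

Lemma dmap_eq1 a : (dmap f g a == \top) = (g a a <= a).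
Proof.
apply/idP/idP => [|gaa_le]; last first.
  by rewrite eq_le lex1 /= -(joinxC a) leU2 ?leC.
rewrite joinxC_eq1 => gaa_le_faa.
set c := g a a `&` ~` a.
have fac_le : f a c <= ~` a by have := ABT3 a (~` a); rewrite complK.
have a_fac : a `&` f a c = \bot by apply/eqP; rewrite meetC disj_leC.
have c_faa : c `&` f a a = \bot.
  by apply/eqP; rewrite -lex0 -(f0x a) -a_fac ABT2.
rewrite -[a in _ <= a]complK -disj_leC -/c -lex0 -c_faa lexI lexx /=.
exact: le_trans (leIl _ _) gaa_le_faa.
Qed.

End Discriminator.

Theorem theorem36 (disp : Order.disp_t) (A : ctbDistrLatticeType disp)
  (f g : A -> A -> A) :
  PS_algebra f g ->
  (forall x : A, x <= f x x) ->
  (forall x y z : A, y `&` f x z <= f (x `&` f x y) z) ->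
  (forall x y : A, f x (g x (~` y) `&` y) <= y) ->
  (unary_discriminator (dmap f g) <->
   (forall a : A, a != \bot -> g a a <= a)).
Proof.
move=> [_ [f_bot [_ [_ [g_bot _]]]]] ABT0 ABT2 ABT3.
have f0x y : f \bot y = \bot by apply: f_bot; left.
have g00 : g \bot \bot = \top by apply: g_bot; left.
have d_eq1 := dmap_eq1 f0x ABT0 ABT2 ABT3.
split => [[_ d_nz] a /d_nz/eqP | gaa_le]; first by rewrite d_eq1.
split => [|a /gaa_le]; first exact: dmap0.
by rewrite -d_eq1 => /eqP.
Qed.
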